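(* Let $\mathbb S[\boldsymbol\kappa]$ be a Hurwitz-stable Child-Selection matrix that contains an unstable-positive feedback as a principal submatrix. Then $\mathbb S[\boldsymbol\kappa]$ is $D$-Hopf.
   Context: For a reaction network with reactant coefficients $s^j_m$ and stoichiometric matrix $\mathbb S$, a $k$-Child-Selection $\boldsymbol\kappa=(\kappa,E_\kappa,J)$ is a bijection $J:\kappa\to E_\kappa$ between $k$ species and $k$ reactions with $s^{J(m)}_m>0$; its CS-matrix is $\mathbb S[\boldsymbol\kappa]_{ml}=\mathbb S_{m,J(l)}$. Hurwitz-stable: all eigenvalues have negative real part; Hurwitz-unstable: some eigenvalue has positive real part. An unstable core is a Hurwitz-unstable CS-matrix with no Hurwitz-unstable proper principal submatrix; a $k\times k$ unstable core is an unstable-positive feedback if $\operatorname{sign}\det=(-1)^{k-1}$ and an unstable-negative feedback if $\operatorname{sign}\det=(-1)^k$. Inertia: numbers of eigenvalues with negative, positive, zero real part. $A$ is $D$-Hopf if there exist an invertible principal submatrix $A[\kappa]$ and positive diagonal $D_1,D_2$ with $\operatorname{inertia}(A[\kappa]D_1)\ne\operatorname{inertia}(A[\kappa]D_2)$. *)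

From HB Require Import structures.
From mathcomp Require Import all_boot all_order all_algebra.
From mathcomp Require Import complex.
Set Implicit Arguments.
Unset Strict Implicit.
Unset Printing Implicit Defensive.
Import Order.TTheory GRing.Theory Num.Theory.
Local Open Scope ring_scope.

Section Defs.
Variable R : rcfType.

Definition cplx_mx m n (A : 'M[R]_(m, n)) : 'M[R[i]]_(m, n) :=
  map_mx (real_complex R) A.

Definition is_eig n (A : 'M[R]_n) (z : R[i]) : Prop := eigenvalue (cplx_mx A) z.

Definition Hurwitz_stable n (A : 'M[R]_n) : Prop :=
  forall z, is_eig A z -> complex.Re z < 0.

Definition Hurwitz_unstable n (A : 'M[R]_n) : Prop :=
  exists z, is_eig A z /\ 0 < complex.Re z.

(* eigenvalues counted with algebraic multiplicity: the roots of the
   (monic) characteristic polynomial of the complexified matrix *)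
Definition eigs n (A : 'M[R]_n) : seq R[i] :=
  sval (closed_field_poly_normal (char_poly (cplx_mx A))).

Definition inertia n (A : 'M[R]_n) : nat * nat * nat :=
  (count (fun z => complex.Re z < 0) (eigs A),
   count (fun z => 0 < complex.Re z) (eigs A),
   count (fun z => complex.Re z == 0) (eigs A)).

Definition psub n (A : 'M[R]_n) (I : {set 'I_n}) : 'M[R]_#|I| :=
  \matrix_(i, j) A (enum_val i) (enum_val j).

Definition unstable_core n (A : 'M[R]_n) : Prop :=
  Hurwitz_unstable A /\
  forall I : {set 'I_n}, I \proper [set: 'I_n] -> ~ Hurwitz_unstable (psub A I).

Definition unstable_positive_feedback k (A : 'M[R]_k) : Prop :=
  unstable_core A /\ Num.sg (\det A) = (-1) ^+ k.-1.

Definition unstable_negative_feedback k (A : 'M[R]_k) : Prop :=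
  unstable_core A /\ Num.sg (\det A) = (-1) ^+ k.

Definition DHopf n (A : 'M[R]_n) : Prop :=
  exists I : {set 'I_n},
    \det (psub A I) != 0 /\
    exists d1 d2 : 'rV[R]_#|I|,
      (forall i, 0 < d1 0 i) /\ (forall i, 0 < d2 0 i) /\
      inertia (psub A I *m diag_mx d1) <> inertia (psub A I *m diag_mx d2).

(* Reaction network with nS species and nE reactions: reactant coefficients
   s (nonnegative) and stoichiometric matrix S. *)
Definition reaction_network nS nE (s : 'M[R]_(nS, nE)) : Prop :=
  forall m j, 0 <= s m j.

(* k-Child-Selection: species kappa = image of f, reactions E_kappa = image
   of g (both injective, k elements each), bijection J : f l |-> g l,
   with s_{f l}^{J(f l)} > 0. *)
Definition child_selection nS nE k (s : 'M[R]_(nS, nE))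
    (f : 'I_k -> 'I_nS) (g : 'I_k -> 'I_nE) : Prop :=
  injective f /\ injective g /\ forall l, 0 < s (f l) (g l).

Definition CSmx nS nE k (S : 'M[R]_(nS, nE))
    (f : 'I_k -> 'I_nS) (g : 'I_k -> 'I_nE) : 'M[R]_k :=
  \matrix_(m, l) S (f m) (g l).

End Defs.

From HB Require Import structures.
From mathcomp Require Import all_boot all_order all_algebra.
From mathcomp Require Import perm complex polyrcf.
From mathcomp Require Import lra.
Import Order.TTheory GRing.Theory Num.Theory.
Local Open Scope ring_scope.
Set Implicit Arguments.
Unset Strict Implicit.
Unset Printing Implicit Defensive.

(* For D = 1 the stable matrix A = S[kappa] has no eigenvalue with positive
   real part.  Let B = A[I] be the unstable-positive feedback: its sign
   condition says det(-B) < 0, i.e. the characteristic polynomial of B is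
   negative at 0, hence at some t > 0.  Let D_e be the diagonal matrix with
   entries 1 on I and e outside I.  Then det(t - A D_e) is a polynomial in e
   whose value at e = 0 is t^(k - |I|) det(t - B) < 0, so it stays negative
   for some e > 0; the monic characteristic polynomial of A D_e then has a
   real root r > t > 0.  Hence A and A D_e have different inertia. *)

Lemma det_reindex (R : comNzRingType) a b (h : 'I_a -> 'I_b) (M : 'M[R]_b) :
  a = b -> injective h -> \det (\matrix_(i, j) M (h i) (h j)) = \det M.
Proof.
move=> eab; subst b => h_inj; pose s := perm h_inj.
have -> : \matrix_(i, j) M (h i) (h j) = row_perm s (col_perm s M).
  by apply/matrixP => i j; rewrite !mxE !permE.
rewrite row_permE col_permE !det_mulmx !det_perm odd_permV.
by rewrite mulrCA -expr2 sqrr_sign mulr1.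
Qed.

Lemma char_poly_reindex (R : comNzRingType) a b (h : 'I_a -> 'I_b)
    (M : 'M[R]_b) :
  a = b -> injective h ->
  char_poly (\matrix_(i, j) M (h i) (h j)) = char_poly M.
Proof.
move=> eab h_inj.
rewrite /char_poly -(det_reindex (char_poly_mx M) eab h_inj).
by congr (\det _); apply/matrixP => i j; rewrite !mxE (inj_eq h_inj).
Qed.

Lemma horner_char_poly (R : comNzRingType) n (M : 'M[R]_n) t :
  (char_poly M).[t] = \det (t%:M - M).
Proof.
rewrite /char_poly -horner_evalE -det_map_mx; congr (\det _).
apply/matrixP => i j; rewrite !mxE /= horner_evalE.
by rewrite hornerD hornerN hornerMn hornerX hornerC.
Qed.

Section RealClosed.
Variable R : rcfType.

Lemma det_scalar_cols n (M : 'M[R]_n) (J : {set 'I_n}) c :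
  (forall i j, j \in J -> M i j = (i == j)%:R * c) ->
  \det M = c ^+ #|J| * \det (psub M (~: J)).
Proof.
move=> MJ.
pose h (k : 'I_(#|~: J| + #|J|)) : 'I_n :=
  match split k with inl i => enum_val i | inr j => enum_val j end.
have hl i : h (lshift _ i) = enum_val i.
  by rewrite /h -[lshift _ i]/(unsplit (inl i)) unsplitK.
have hr i : h (rshift _ i) = enum_val i.
  by rewrite /h -[rshift _ i]/(unsplit (inr i)) unsplitK.
have h_inj : injective h.
  move=> x y; rewrite /h.
  case: splitP => [i Ei|i Ei]; case: splitP => [j Ej|j Ej].
  - by move/enum_val_inj => eij; apply: ord_inj; rewrite Ei Ej eij.
  - by move=> e; have := enum_valP i; rewrite e inE (enum_valP j).
  - by move=> e; have := enum_valP j; rewrite -e inE (enum_valP i).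
  - by move/enum_val_inj => eij; apply: ord_inj; rewrite Ei Ej eij.
have card_split : (#|~: J| + #|J| = n)%N by rewrite addnC cardsC card_ord.
rewrite -(det_reindex M card_split h_inj).
set N := \matrix_(i, j) M (h i) (h j).
have N_ur : ursubmx N = 0.
  apply/matrixP => i j; rewrite !mxE hl hr MJ ?enum_valP //.
  case: eqP => [e|]; last by rewrite mul0r.
  by have := enum_valP i; rewrite e inE (enum_valP j).
have N_dr : drsubmx N = c%:M.
  apply/matrixP => i j; rewrite !mxE !hr MJ ?enum_valP //.
  by rewrite (inj_eq enum_val_inj) mulrC mulr_natr.
have N_ul : ulsubmx N = psub M (~: J) by apply/matrixP => i j; rewrite !mxE !hl.
by rewrite -[N]submxK N_ur N_dr N_ul det_lblock det_scalar mulrC.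
Qed.

Lemma mem_eigs n (M : 'M[R]_n) z :
  (z \in eigs M) = root (char_poly (cplx_mx M)) z.
Proof.
rewrite /eigs; case: closed_field_poly_normal => r /= ->.
by rewrite rootZ ?root_prod_XsubC // (monicP (char_poly_monic _)) oner_neq0.
Qed.

Lemma eigs_char_poly n m (M : 'M[R]_n) (N : 'M[R]_m) :
  char_poly M = char_poly N -> eigs M = eigs N.
Proof. by move=> E; rewrite /eigs /cplx_mx -!map_char_poly E. Qed.

Lemma inertia_char_poly n m (M : 'M[R]_n) (N : 'M[R]_m) :
  char_poly M = char_poly N -> inertia M = inertia N.
Proof. by move=> /eigs_char_poly E; rewrite /inertia E. Qed.

Lemma Hurwitz_stable_inertia_pos0 n (M : 'M[R]_n) :
  Hurwitz_stable M -> (inertia M).1.2 = 0%N.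
Proof.
move=> M_stable; apply/eqP; rewrite -leqn0 leqNgt -has_count.
apply/hasP => -[z]; rewrite mem_eigs -eigenvalue_root_char => /M_stable.
by move=> /lt_gtF ->.
Qed.

Lemma inertia_pos_real_root n (M : 'M[R]_n) r :
  0 < r -> root (char_poly M) r -> (0 < (inertia M).1.2)%N.
Proof.
move=> r_gt0 r_root; rewrite -has_count; apply/hasP; exists (r%:C)%C => //.
rewrite mem_eigs /cplx_mx -map_char_poly /root horner_map.
by move/eqP: r_root => ->; rewrite rmorph0.
Qed.

Lemma Hurwitz_stable_det_neq0 n (M : 'M[R]_n) : Hurwitz_stable M -> \det M != 0.
Proof.
move=> M_stable; apply/negP => /eqP det0.
suff /M_stable : is_eig M 0 by rewrite ltxx.
rewrite /is_eig eigenvalue_root_char /cplx_mx -map_char_poly /root.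
rewrite -(rmorph0 (real_complex R)) horner_map horner_coef0 char_poly_det det0.
by rewrite mulr0 rmorph0.
Qed.

(* Instability of the core is used only to rule out k = 0. *)
Lemma positive_feedback_det_opp_lt0 k (B : 'M[R]_k) :
  unstable_positive_feedback B -> \det (- B) < 0.
Proof.
case: k B => [|k] B [[[z [z_eig _]] _] sg_det].
  move: z_eig; rewrite /is_eig eigenvalue_root_char /char_poly det_mx00.
  by rewrite /root hornerC oner_eq0.
rewrite -scaleN1r detZ -sgr_lt0 sgrM sg_det sgrX sgrN1 /=.
by rewrite exprS mulN1r mulNr -expr2 sqrr_sign ltrN10.
Qed.

Lemma poly_lt0_right {p : {poly R}} {a : R} :
  p.[a] < 0 -> exists2 x, a < x & p.[x] < 0.
Proof.
rewrite -oppr_gt0 => pa_lt0; have [d d_gt0 near_a] := poly_cont a p pa_lt0.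
exists (a + d / 2); first by rewrite ltrDl divr_gt0.
have /near_a : `|a + d / 2 - a| < d.
  by rewrite addrC addKr gtr0_norm ?divr_gt0 //; lra.
by move/(le_lt_trans (ler_norm _)); lra.
Qed.

Lemma monic_root_gt {p : {poly R}} {t : R} :
  p \is monic -> p.[t] < 0 -> exists2 r, t < r & root p r.
Proof.
move=> p_monic pt_lt0.
have lc_gt0 : 0 < lead_coef p by rewrite (monicP p_monic) ltr01.
have [N p_ge_lc] := poly_pinfty_gt_lc lc_gt0.
pose b := Num.max t N.
have tb : t <= b by rewrite le_max lexx.
have pb_gt0 : 0 < p.[b].
  by apply: lt_le_trans lc_gt0 (p_ge_lc _ _); rewrite le_max lexx orbT.
have sign_change : p.[t] <= 0 <= p.[b] by rewrite !ltW.
have [r /andP[tr _] r_root] := poly_ivt tb sign_change.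
exists r => //; rewrite lt_neqAle tr andbT; apply: contraTneq r_root => <-.
by rewrite /root lt_eqF.
Qed.

Definition scale_outside k (I : {set 'I_k}) (e : R) : 'rV[R]_k :=
  \row_j (if j \in I then 1 else e).

Lemma det_sub_scale_outside0 k (A : 'M[R]_k) (I : {set 'I_k}) t :
  \det (t%:M - A *m diag_mx (scale_outside I 0))
  = t ^+ #|~: I| * (char_poly (psub A I)).[t].
Proof.
rewrite (@det_scalar_cols _ _ (~: I) t) => [|i j]; last first.
  by rewrite inE mul_mx_diag !mxE => /negbTE ->; rewrite mulr0 subr0 mulr_natl.
rewrite setCK horner_char_poly; congr (_ * \det _).
apply/matrixP => i j; rewrite mul_mx_diag !mxE (enum_valP j) mulr1.
by rewrite (inj_eq enum_val_inj).
Qed.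

Lemma det_sub_scale_outside_poly k (A : 'M[R]_k) (I : {set 'I_k}) t :
  exists P : {poly R}, forall e,
    P.[e] = \det (t%:M - A *m diag_mx (scale_outside I e)).
Proof.
exists (\det (\matrix_(i, j)
   ((t *+ (i == j))%:P - (A i j)%:P * (if j \in I then 1 else 'X)))) => e.
rewrite -horner_evalE -det_map_mx; congr (\det _).
apply/matrixP => i j; rewrite mul_mx_diag !mxE /= horner_evalE.
by case: (j \in I); rewrite hornerD hornerN hornerM !hornerC ?hornerX ?mulr1.
Qed.

Lemma diag_scaling_pos_root k (A : 'M[R]_k) (I : {set 'I_k}) :
  \det (- psub A I) < 0 ->
  exists d : 'rV[R]_k, (forall i, 0 < d 0 i) /\
    exists2 r, 0 < r & root (char_poly (A *m diag_mx d)) r.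
Proof.
move=> det_lt0.
have chiB0 : (char_poly (psub A I)).[0] < 0.
  by rewrite horner_char_poly raddf0 sub0r.
have [t t_gt0 chiBt] := poly_lt0_right chiB0.
have [P P_det] := det_sub_scale_outside_poly A I t.
have P0 : P.[0] < 0.
  by rewrite P_det det_sub_scale_outside0 pmulr_rlt0 // exprn_gt0.
have [e e_gt0 Pe] := poly_lt0_right P0.
exists (scale_outside I e); split => [i|]; first by rewrite mxE; case: ifP.
have chit : (char_poly (A *m diag_mx (scale_outside I e))).[t] < 0.
  by rewrite horner_char_poly -P_det.
have [r tr r_root] := monic_root_gt (char_poly_monic _) chit.
by exists r => //; apply: lt_trans tr.
Qed.

Lemma DHopf_diag_inertia k (A : 'M[R]_k) (d1 d2 : 'rV[R]_k) :
  \det A != 0 -> (forall i, 0 < d1 0 i) -> (forall i, 0 < d2 0 i) ->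
  inertia (A *m diag_mx d1) <> inertia (A *m diag_mx d2) -> DHopf A.
Proof.
move=> detA d1_gt0 d2_gt0 inertia_neq.
have card_setT : #|[set: 'I_k]| = k by rewrite cardsT card_ord.
pose reindex (d : 'rV[R]_k) := \row_i d 0 (enum_val i) : 'rV_#|[set: 'I_k]|.
have inertia_reindex d :
    inertia (psub A [set: 'I_k] *m diag_mx (reindex d))
    = inertia (A *m diag_mx d).
  apply: inertia_char_poly.
  rewrite -(char_poly_reindex (A *m diag_mx d) card_setT enum_val_inj).
  by congr char_poly; apply/matrixP => i j; rewrite !mul_mx_diag !mxE.
exists [set: 'I_k]; split.
  by rewrite /psub (det_reindex A card_setT enum_val_inj).
exists (reindex d1), (reindex d2).
split; first by move=> i; rewrite mxE.
split; first by move=> i; rewrite mxE.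
by rewrite (inertia_reindex d1) (inertia_reindex d2).
Qed.

End RealClosed.

Theorem mainTheorem12 (R : rcfType) (nS nE k : nat)
    (s S : 'M[R]_(nS, nE)) (f : 'I_k -> 'I_nS) (g : 'I_k -> 'I_nE) :
  reaction_network s ->
  child_selection s f g ->
  Hurwitz_stable (CSmx S f g) ->
  (exists I : {set 'I_k}, unstable_positive_feedback (psub (CSmx S f g) I)) ->
  DHopf (CSmx S f g).
Proof.
move=> _ _ A_stable [I /positive_feedback_det_opp_lt0 det_lt0].
have [d [d_gt0 [r r_gt0 r_root]]] := diag_scaling_pos_root det_lt0.
apply: (DHopf_diag_inertia (d1 := const_mx 1) (d2 := d)) => //.
- exact: Hurwitz_stable_det_neq0.
- by move=> i; rewrite mxE ltr01.
rewrite diag_const_mx mulmx1 => same_inertia.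
have := inertia_pos_real_root r_gt0 r_root.
by rewrite -same_inertia Hurwitz_stable_inertia_pos0.
Qed.
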